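(* (1) There exists a function $r:[\omega]^\omega\to[\omega]^\omega$ such that for every $x,z\in[\omega]^\omega$ there is $y\in[x]^\omega$ with $r(y)=z$. (2) There exists a function $r:[\omega]^\omega\to 2^{\aleph_0}$ such that for every $x\in[\omega]^\omega$ and every $\beta<2^{\aleph_0}$ there is $y\in[x]^\omega$ with $r(y)=\beta$. (3) For every infinite cardinal $\lambda$ there is a function $r:[\lambda]^\omega\to 2^{\aleph_0}$ such that for every $x\in[\lambda]^\omega$ and every $\beta<2^{\aleph_0}$ there is $y\in[x]^\omega$ with $r(y)=\beta$ (and likewise with $[\omega]^\omega$ as target in place of $2^{\aleph_0}$).
   Context: Work in ZFC. For a set $X$, $[X]^\omega$ denotes the set of countably infinite subsets of $X$. *)

From Stdlib Require Import Classical FunctionalExtensionality PropExtensionality.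

Definition countably_infinite {T : Type} (A : T -> Prop) : Prop :=
  exists f : nat -> T,
    (forall n m, f n = f m -> n = m) /\ (forall t, A t <-> exists n, f n = t).

Definition subset {T : Type} (A B : T -> Prop) : Prop := forall t, A t -> B t.

Definition infinite_type (T : Type) : Prop :=
  exists f : nat -> T, forall n m, f n = f m -> n = m.

(* There is r : [L]^omega -> 2^aleph0 (modelled as nat -> bool) such that for every
   x in [L]^omega and every beta, some y in [x]^omega has r y = beta. *)
Definition onto_continuum_everywhere (L : Type) : Prop :=
  exists r : (L -> Prop) -> (nat -> bool),
    forall x : L -> Prop, countably_infinite x ->
    forall beta : nat -> bool,
    exists y : L -> Prop, subset y x /\ countably_infinite y /\ r y = beta.

Definition onto_omega_everywhere (L : Type) : Prop :=
  exists r : (L -> Prop) -> (nat -> Prop),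
    (forall y : L -> Prop, countably_infinite y -> countably_infinite (r y)) /\
    forall x : L -> Prop, countably_infinite x ->
    forall z : nat -> Prop, countably_infinite z ->
    exists y : L -> Prop, subset y x /\ countably_infinite y /\ r y = z.

(* There are continuum many pairs (x, beta) with x in [omega]^omega, and each such
   x has continuum many infinite subsets; a transfinite recursion along a well-order
   of the pairs of order type 2^aleph0 picks pairwise distinct subsets y(x, beta) of x,
   and r(y(x, beta)) := beta.  For an arbitrary set L, fix a maximal almost disjoint
   family F of countable subsets of L: every countable x meets some a in F in an
   infinite set, and every countable y contained in a member of F determines that
   member, so r for omega transfers to L along enumerations of the members of F.
   The [omega]^omega-valued versions follow by reading beta as a characteristic
   function. *)

From Stdlib Require Import ClassicalEpsilon Wellfounded.
From mathcomp Require Import ssreflect ssrfun ssrbool eqtype ssrnat boolp wochoice.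
From mathcomp Require Import zify.
From mathcomp Require classical_sets.

Lemma well_ordering (T : Type) :
  exists lt : T -> T -> Prop,
    well_founded lt /\ forall x y, lt x y \/ x = y \/ lt y x.
Proof.
elim/Peq: T => T.
have [R Rwo] := well_ordering_principle T.
have Rchain : wo_chain R predT by apply: withinW.
have R_total := wo_chainW Rchain.
have R_anti := wo_chain_antisymmetric Rchain.
exists (fun x y => R x y /\ x <> y); split.
- move=> x; apply: contrapT => x_nacc.
  have [|z [[/asboolP z_nacc z_min] _]] :=
    Rwo [pred w | `[< ~ Acc (fun x y => R x y /\ x <> y) w >]].
    by exists x; apply/asboolP.
  apply: z_nacc; constructor => y [Ryz yz]; apply: contrapT => y_nacc.
  by apply: yz; apply: R_anti => //; rewrite Ryz z_min //; apply/asboolP.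
- move=> x y; have [->|xy] := eqVneq x y; first by right; left.
  have /orP[Rxy|Ryx] := R_total x y isT isT.
  + by left; split=> //; apply/eqP.
  + by right; right; split=> //; apply/eqP; rewrite eq_sym.
Qed.

Lemma well_founded_minimal {T : Type} {lt : T -> T -> Prop} {P : T -> Prop} :
  well_founded lt -> (exists t, P t) -> exists t, P t /\ forall s, lt s t -> ~ P s.
Proof.
move=> lt_wf [t Pt]; apply: contrapT => no_min.
elim/(well_founded_ind lt_wf): t Pt => t IH Pt.
by apply: no_min; exists t; split=> // s /IH.
Qed.

(* A well-order of order type |T|: pull back a well-order along an injection of T
   into the shortest initial segment that admits one. *)
Lemma initial_well_ordering (T : Type) :
  exists lt : T -> T -> Prop,
    [/\ well_founded lt, forall x y, lt x y \/ x = y \/ lt y x &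
        forall t (k : T -> T), injective k -> ~ forall a, lt (k a) t].
Proof.
have [lt0 [lt0_wf lt0_tri]] := well_ordering T.
pose long t := exists k : T -> T, injective k /\ forall a, lt0 (k a) t.
have [/(well_founded_minimal lt0_wf)[t0 [[g [g_inj g_t0]] t0_min]] | no_long] :=
  pselect (exists t, long t); last first.
  by exists lt0; split=> // t k k_inj k_t; apply: no_long; exists t, k.
exists (fun x y => lt0 (g x) (g y)); split.
- exact: wf_inverse_image.
- move=> x y; have [|[/g_inj|]] := lt0_tri (g x) (g y); tauto.
- move=> t k k_inj k_t; apply: (t0_min (g t) (g_t0 t)).
  by exists (g \o k); split; [exact: inj_comp|].
Qed.

Section DistinctRepresentatives.

Variables (T U : Type) (P : T -> U -> Prop).
Hypothesis U_inhabited : inhabited U.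
Hypothesis many_candidates :
  forall t, exists k : T -> U, injective k /\ forall a, P t (k a).

(* The values g s for s below t form a set of size less than |T|, so they cannot
   exhaust the |T| many candidates for t. *)
Lemma fresh_candidate {lt : T -> T -> Prop} {t : T} (g : T -> U) :
  (forall k : T -> T, injective k -> ~ forall a, lt (k a) t) ->
  exists u, P t u /\ forall s, lt s t -> u <> g s.
Proof.
move=> t_short; apply: contrapT => no_fresh.
have [k [k_inj Pk]] := many_candidates t.
have /choice[m m_k] : forall a, exists s, lt s t /\ k a = g s.
  move=> a; apply: contrapT => k_fresh; apply: no_fresh.
  by exists (k a); split=> // s st ka; apply: k_fresh; exists s.
apply: (t_short m) => [a b mab|a]; last by case: (m_k a).
by apply: k_inj; rewrite (m_k a).2 (m_k b).2 mab.
Qed.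

Theorem injective_choice : exists h : T -> U, injective h /\ forall t, P t (h t).
Proof.
have [lt [lt_wf lt_tri lt_short]] := initial_well_ordering T.
pose F t (rec : forall s, lt s t -> U) :=
  epsilon U_inhabited (fun u => P t u /\ forall s (st : lt s t), u <> rec s st).
pose h : T -> U := Fix lt_wf (fun _ => U) F.
have h_fresh t : P t (h t) /\ forall s, lt s t -> h t <> h s.
  rewrite /h Fix_eq -/h; last first.
    move=> x f g fg; suff -> : f = g by [].
    by apply: functional_extensionality_dep => s; apply/functional_extensionality_dep/fg.
  exact (epsilon_spec U_inhabited (fun u => P t u /\ forall s, lt s t -> u <> h s)
           (fresh_candidate h (lt_short t))).
exists h; split=> [a b hab|t]; last by case: (h_fresh t).
have [ab|[//|ba]] := lt_tri a b.
- by case: ((h_fresh b).2 a ab).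
- by case: ((h_fresh a).2 b ba).
Qed.

End DistinctRepresentatives.

Definition range {A B : Type} (f : A -> B) : B -> Prop := fun b => exists a, f a = b.

Definition infinite_set {T : Type} (A : T -> Prop) : Prop :=
  exists f : nat -> T, injective f /\ forall n, A (f n).

Lemma countably_infiniteE {T : Type} (A : T -> Prop) :
  countably_infinite A <-> exists f : nat -> T, injective f /\ A = range f.
Proof.
split=> [[f [f_inj Af]] | [f [f_inj ->]]]; exists f; split=> //.
by apply: funext => t; apply: propext.
Qed.

Lemma countably_infinite_range {T : Type} {f : nat -> T} :
  injective f -> countably_infinite (range f).
Proof. by move=> f_inj; apply/countably_infiniteE; exists f. Qed.

Lemma countably_infinite_infinite_set {T : Type} {A : T -> Prop} :
  countably_infinite A -> infinite_set A.
Proof. by case/countably_infiniteE=> f [f_inj ->]; exists f; split=> // n; exists n. Qed.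

Lemma infinite_setS {T : Type} {A B : T -> Prop} :
  subset A B -> infinite_set A -> infinite_set B.
Proof. by move=> AB [f [f_inj Af]]; exists f; split=> // n; apply/AB/Af. Qed.

Definition interleave (b c : nat -> bool) : nat -> bool :=
  fun n => if odd n then c n./2 else b n./2.

Lemma interleave_inj b c b' c' :
  interleave b c = interleave b' c' -> b = b' /\ c = c'.
Proof.
move=> e; split; apply: funext => n.
- by have := congr1 (fun f => f n.*2) e; rewrite /interleave odd_double doubleK.
- by have := congr1 (fun f => f n.*2.+1) e; rewrite /interleave /= odd_double uphalf_double.
Qed.

Lemma double_addb_inj n m (b b' : bool) : n.*2 + b = m.*2 + b' -> n = m /\ b = b'.
Proof. by case: b b' => [] [] /= e; split=> //; lia. Qed.

Definition branch {L : Type} (g : nat -> L) (c : nat -> bool) : L -> Prop :=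
  range (fun n => g (n.*2 + c n)).

Lemma continuum_many_subsets {L : Type} {x : L -> Prop} : countably_infinite x ->
  exists k : (nat -> bool) -> L -> Prop,
    injective k /\ forall c, subset (k c) x /\ countably_infinite (k c).
Proof.
case/countably_infiniteE=> g [g_inj ->]; exists (branch g); split=> [c c' cc'|c].
  apply: funext => n.
  have [m /g_inj/double_addb_inj[-> ->]] : branch g c' (g (n.*2 + c n)).
    by rewrite -cc'; exists n.
  by [].
split; first by move=> _ [n <-]; exists (n.*2 + c n).
by apply: countably_infinite_range => n m /g_inj/double_addb_inj[].
Qed.

Lemma onto_continuum_everywhere_nat : onto_continuum_everywhere nat.
Proof.
pose T := ((nat -> Prop) * (nat -> bool))%type.
pose code (t : T) := interleave (fun n => `[< t.1 n >]) t.2.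
have code_inj : injective code.
  move=> [x b] [x' b']; rewrite /code /= => /interleave_inj[xx' ->]; congr pair.
  apply: funext => n; apply: propext; apply: asbool_eq_equiv.
  exact: (congr1 (fun f => f n) xx').
pose P (t : T) (y : nat -> Prop) :=
  countably_infinite t.1 -> subset y t.1 /\ countably_infinite y.
have [h [h_inj h_sub]] : exists h : T -> nat -> Prop, injective h /\ forall t, P t (h t).
  apply: injective_choice; first exact: inhabits (fun _ => True).
  move=> [x b]; have [x_ci|x_nci] := pselect (countably_infinite x).
    have [k [k_inj k_sub]] := continuum_many_subsets x_ci.
    by exists (k \o code); split=> [|t _]; [exact: inj_comp | exact: k_sub].
  have [k [k_inj _]] := continuum_many_subsets (countably_infinite_range (@inj_id nat)).
  by exists (k \o code); split=> [|t /x_nci//]; exact: inj_comp.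
pose t0 : T := (fun _ => True, fun _ => false).
exists (fun y => (epsilon (inhabits t0) (fun t => h t = y)).2) => x x_ci b.
have [hx_sub hx_ci] := h_sub (x, b) x_ci.
exists (h (x, b)); do !split=> //.
have := epsilon_spec (inhabits t0) (fun t => h t = h (x, b)) (ex_intro _ (x, b) erefl).
by move/h_inj->.
Qed.

Definition almost_disjoint {L : Type} (F : (L -> Prop) -> Prop) : Prop :=
  (forall a, F a -> countably_infinite a) /\
  (forall a b, F a -> F b -> infinite_set (fun l => a l /\ b l) -> a = b).

Lemma maximal_almost_disjoint (L : Type) :
  exists F : (L -> Prop) -> Prop, almost_disjoint F /\
    forall x, countably_infinite x -> exists2 a, F a & infinite_set (fun l => x l /\ a l).
Proof.
have [|F [[F_ci F_ad] F_max]] := @classical_sets.Zorn_bigcup (L -> Prop) almost_disjoint.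
  move=> G G_ad G_chain; split=> [a [X GX Xa] | a b [X GX Xa] [Y GY Yb]].
    exact: (G_ad X GX).1.
  have [XY|YX] := G_chain X Y GX GY.
  - exact: (G_ad Y GY).2 (XY a Xa) Yb.
  - exact: (G_ad X GX).2 Xa (YX b Yb).
exists F; split=> // x x_ci; apply: contrapT => x_new.
have x_inf := countably_infinite_infinite_set x_ci.
have xa_fin a : F a -> ~ infinite_set (fun l => a l /\ x l).
  move=> Fa ax_inf; apply: x_new; exists a => //.
  by apply: infinite_setS ax_inf => l [].
apply: (F_max (fun a => F a \/ a = x)).
  split=> [a Fa|]; first by left.
  move=> /(_ x (or_intror erefl)) Fx; apply: (xa_fin x Fx).
  by apply: infinite_setS x_inf => l xl; split.
split=> [a [/F_ci//|->//] | a b [Fa|->] [Fb|->] ab_inf //].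
- exact: F_ad.
- by case: (xa_fin a Fa).
- case: (xa_fin b Fb); apply: infinite_setS ab_inf => l []; by split.
Qed.

Lemma infinite_set_preimage {L : Type} (x : L -> Prop) (e : nat -> L) :
  infinite_set (fun l => x l /\ range e l) -> infinite_set (fun n => x (e n)).
Proof.
case=> g [g_inj g_xe].
have /choice[m e_m] : forall k, exists n, e n = g k.
  by move=> k; case: (g_xe k).
exists m; split=> [i j mij|k]; first by apply: g_inj; rewrite -!e_m mij.
by rewrite e_m; case: (g_xe k).
Qed.

Lemma preimage_range_comp {L : Type} (e : nat -> L) (f : nat -> nat) :
  injective e -> (fun n => range (e \o f) (e n)) = range f.
Proof.
move=> e_inj; apply: funext => n; apply: propext.
by split=> [[k /e_inj <-] | [k <-]]; exists k.
Qed.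

Lemma onto_continuum_everywhere_transfer (L : Type) :
  onto_continuum_everywhere nat -> onto_continuum_everywhere L.
Proof.
move=> [r0 r0_onto]; have [[l0]|L_empty] := pselect (inhabited L); last first.
  by exists (fun _ _ => false) => x [f _]; case: L_empty; exact: inhabits (f 0).
have [F [[F_ci F_ad] F_max]] := maximal_almost_disjoint L.
have /choice[enum enumP] :
    forall a, exists e : nat -> L, F a -> injective e /\ a = range e.
  move=> a; have [Fa|nFa] := pselect (F a); last by exists (fun _ => l0).
  by have /countably_infiniteE[e ?] := F_ci a Fa; exists e.
have /choice[cover coverP] : forall y : L -> Prop,
    exists a, (exists a, F a /\ subset y a) -> F a /\ subset y a.
  move=> y; have [[a ?]|no_cover] := pselect (exists a, F a /\ subset y a).
    by exists a.
  by exists y.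
(* A countably infinite y inside some member of F lies in exactly one member, since
   F is almost disjoint; r reads y through the enumeration of that member. *)
exists (fun y => r0 (fun n => y (enum (cover y) n))) => x x_ci b.
have [a Fa xa_inf] := F_max x x_ci.
have [e_inj a_e] := enumP a Fa.
move: xa_inf; rewrite {1}a_e => /infinite_set_preimage[m [m_inj x_em]].
have [y' [y'_m [/countably_infiniteE[f [f_inj y'_f]] r0_y']]] :=
  r0_onto _ (countably_infinite_range m_inj) b.
subst y'.
set e := enum a in e_inj a_e x_em *.
have y_ci : countably_infinite (range (e \o f)).
  exact: countably_infinite_range (inj_comp e_inj f_inj).
have cover_y : cover (range (e \o f)) = a.
  have [|F_cover y_cover] := coverP (range (e \o f)).
    by exists a; split=> //; rewrite a_e => _ [k <-]; exists (f k).
  apply: F_ad => //; apply: infinite_setS (countably_infinite_infinite_set y_ci).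
  by move=> l yl; split; [apply: y_cover | rewrite a_e; case: yl => k <-; exists (f k)].
exists (range (e \o f)); do !split=> //; last by rewrite cover_y preimage_range_comp.
by move=> _ [k <-] /=; have [j <-] := y'_m (f k) (ex_intro _ k erefl); exact: x_em.
Qed.

Lemma onto_omega_of_onto_continuum (L : Type) :
  onto_continuum_everywhere L -> onto_omega_everywhere L.
Proof.
move=> [r r_onto].
pose to_set (c : nat -> bool) : nat -> Prop :=
  if `[< countably_infinite (fun n => is_true (c n)) >] then fun n => is_true (c n)
  else range id.
exists (to_set \o r); split=> [y _ | x x_ci z z_ci].
  rewrite /= /to_set; case: asboolP => // _.
  exact: countably_infinite_range (@inj_id nat).
have [y [y_x [y_ci ry]]] := r_onto x x_ci (fun n => `[< z n >]).
exists y; do !split=> //; rewrite /= ry /to_set.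
have -> : (fun n => is_true `[< z n >]) = z by apply: funext => n; rewrite asboolE.
by rewrite asboolT.
Qed.

Theorem lemma2p1 :
  onto_omega_everywhere nat /\
  onto_continuum_everywhere nat /\
  (forall L : Type, infinite_type L ->
     onto_continuum_everywhere L /\ onto_omega_everywhere L).
Proof.
have onto_continuum L : onto_continuum_everywhere L.
  exact: onto_continuum_everywhere_transfer onto_continuum_everywhere_nat.
have onto_omega L : onto_omega_everywhere L.
  exact/onto_omega_of_onto_continuum/onto_continuum.
split; first exact: onto_omega.
split; first exact: onto_continuum.
by move=> L _; split.
Qed.
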